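(* Consider the perfectly observed state-space system described in the context, and let $\hat\Pi_t=\mu_t(X_t)$ for $t=0,\dots,T$ (so $\hat\sigma_t(m_t)=\mu_t(x_t)$, where $x_t$ is the last state in $m_t$). Then $\hat\Pi_t$ is an approximate information state, and for all $t=0,\dots,T$, all memories $m_t=(x_{0:t},u_{0:t-1})$ and all $u_t\in\mathcal{U}_t$: (i) $\big|\sup_{c\in[[C_t|m_t,u_t]]}c-\sup_{c\in[[C_t|\mu_t(x_t),u_t]]}c\big|\le\epsilon_t:=2L_{d_t}\gamma_t$; (ii) $\mathcal{H}\big([[\hat\Pi_{t+1}|m_t,u_t]],[[\hat\Pi_{t+1}|\mu_t(x_t),u_t]]\big)\le\delta_t:=2\gamma_{t+1}+2L_{f_t}\gamma_t$, with $\gamma_{T+1}:=0$.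
   Context: Hausdorff distance: for nonempty subsets $\mathcal{A},\mathcal{B}$ of a metric space $(\mathcal{S},\eta)$, $\mathcal{H}(\mathcal{A},\mathcal{B}):=\max\{\sup_{a\in\mathcal{A}}\inf_{b\in\mathcal{B}}\eta(a,b),\sup_{b\in\mathcal{B}}\inf_{a\in\mathcal{A}}\eta(a,b)\}$. A function $f$ between metric spaces is $L$-invertible if there is $L\ge0$ with $\mathcal{H}(f^{-1}(y^1),f^{-1}(y^2))\le L\,\eta(y^1,y^2)$ for all $y^1,y^2$ in its image. System: horizon $T$; compact subsets $\mathcal{X}_t,\mathcal{W}_t$ of a metric space $(\mathcal{S},\eta)$ and action sets $\mathcal{U}_t$; state $X_{t+1}=f_t(X_t,U_t,W_t)$ with independent $X_0\in\mathcal{X}_0$, $W_t\in\mathcal{W}_t$; observation $Y_t=X_t$; cost $C_t=d_t(X_t,U_t)$. Memory $M_t=(X_{0:t},U_{0:t-1})$. $L_{d_t}$ is a Lipschitz constant of $d_t$ in the state (uniformly in $u$), $L_{f_t}$ a Lipschitz constant of $f_t$ in the state (uniformly in $u,w$). Quantization: finite $\hat{\mathcal{X}}_t\subset\mathcal{X}_t$ and $\gamma_t\ge0$ with $\mu_t(x):=\arg\min_{\hat x\in\hat{\mathcal{X}}_t}\eta(x,\hat x)$ satisfying $\max_{x\in\mathcal{X}_t}\eta(x,\mu_t(x))\le\gamma_t$; at $T+1$, $\mu_{T+1}$ is the identity. Ranges in this system: $[[C_t|m_t,u_t]]=\{d_t(x_t,u_t)\}$; $[[C_t|\hat x,u_t]]=\{d_t(x,u_t):x\in\mathcal{X}_t,\mu_t(x)=\hat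 x\}$; $[[\hat\Pi_{t+1}|m_t,u_t]]=\{\mu_{t+1}(f_t(x_t,u_t,w)):w\in\mathcal{W}_t\}$; $[[\hat\Pi_{t+1}|\hat x,u_t]]=\{\mu_{t+1}(f_t(x,u_t,w)):x\in\mathcal{X}_t,\ \mu_t(x)=\hat x,\ w\in\mathcal{W}_t\}$. Approximate information state: $\hat\Pi_t=\hat\sigma_t(M_t)$ with $\hat\sigma_t$ $L$-invertible into a bounded metric space, such that for each $t$ there are $\epsilon_t,\delta_t,\lambda_t\ge0$ with, for all $m_t,u_t$: (1) $|\sup[[C_t|m_t,u_t]]-\sup[[C_t|\hat\sigma_t(m_t),u_t]]|\le\epsilon_t$; (2) $\mathcal{H}([[\hat\Pi_{t+1}|m_t,u_t]],[[\hat\Pi_{t+1}|\hat\sigma_t(m_t),u_t]])\le\delta_t$; (3) $\mathcal{H}([[\hat\Pi_{t+1}|\hat\pi^1,u_t]],[[\hat\Pi_{t+1}|\hat\pi^2,u_t]])\le\lambda_t\eta(\hat\pi^1,\hat\pi^2)$ for all values $\hat\pi^1,\hat\pi^2$ of $\hat\Pi_t$. *)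

From HB Require Import structures.
From mathcomp Require Import all_boot all_order all_algebra.
From mathcomp Require Import boolp classical_sets functions cardinality reals constructive_ereal ereal.

Set Implicit Arguments.
Unset Strict Implicit.
Unset Printing Implicit Defensive.

Import Order.TTheory GRing.Theory Num.Theory.
Local Open Scope classical_set_scope.
Local Open Scope ring_scope.

Section Defs.
Variable R : realType.

Definition is_metric (S : Type) (eta : S -> S -> R) : Prop :=
  [/\ forall x y, 0 <= eta x y,
      forall x y, eta x y = 0 <-> x = y,
      forall x y, eta x y = eta y x &
      forall x y z, eta x z <= eta x y + eta y z].

Definition eta_compact (S : Type) (eta : S -> S -> R) (A : set S) : Prop :=
  forall u : nat -> S, (forall n, A (u n)) ->
  exists (phi : nat -> nat) (l : S),
    (forall n, (phi n < phi n.+1)%N) /\ A l /\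
    forall e : R, 0 < e -> exists N : nat, forall n, (N <= n)%N -> eta (u (phi n)) l < e.

Definition hausdorff (S : Type) (eta : S -> S -> R) (A B : set S) : \bar R :=
  Order.max
    (ereal_sup [set ereal_inf [set (eta a b)%:E | b in B] | a in A])
    (ereal_sup [set ereal_inf [set (eta a b)%:E | a in A] | b in B]).

Definition L_invertible (M Y : Type) (dM : M -> M -> R) (dY : Y -> Y -> R)
  (A : set M) (f : M -> Y) (L : R) : Prop :=
  0 <= L /\
  forall y1 y2, (f @` A) y1 -> (f @` A) y2 ->
    (hausdorff dM (A `&` f @^-1` [set y1]) (A `&` f @^-1` [set y2])
       <= (L * dY y1 y2)%:E)%E.

(** memories m_t = (x_{0:t}, u_{0:t-1}) *)
Record memory (S : Type) (U : nat -> Type) (t : nat) := Mem {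
  mem_x : 'I_t.+1 -> S;
  mem_u : forall s : 'I_t, U s }.

Definition last_state (S : Type) (U : nat -> Type) (t : nat) (m : memory S U t) : S :=
  mem_x m ord_max.

Definition memories (S : Type) (U : nat -> Type) (X : nat -> set S) (t : nat) :
  set (memory S U t) :=
  [set m | forall s : 'I_t.+1, X s (mem_x m s)].

Definition mem_dist (S : Type) (U : nat -> Type) (eta : S -> S -> R)
  (rho : forall s, U s -> U s -> R) (t : nat) (m1 m2 : memory S U t) : R :=
  Num.max (\big[Num.max/0]_(s < t.+1) eta (mem_x m1 s) (mem_x m2 s))
          (\big[Num.max/0]_(s < t) rho s (mem_u m1 s) (mem_u m2 s)).

Definition rangeC_mem (S : Type) (U : nat -> Type) (d : forall t, S -> U t -> R)
  (t : nat) (m : memory S U t) (u : U t) : set R :=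
  [set d t (last_state m) u].

Definition rangeC_hat (S : Type) (U : nat -> Type) (X : nat -> set S)
  (mu : nat -> S -> S) (d : forall t, S -> U t -> R)
  (t : nat) (xh : S) (u : U t) : set R :=
  [set d t x u | x in [set x | X t x /\ mu t x = xh]].

Definition rangePi_mem (S : Type) (U : nat -> Type) (W : nat -> set S)
  (mu : nat -> S -> S) (f : forall t, S -> U t -> S -> S)
  (t : nat) (m : memory S U t) (u : U t) : set S :=
  [set mu t.+1 (f t (last_state m) u w) | w in W t].

Definition rangePi_hat (S : Type) (U : nat -> Type) (X W : nat -> set S)
  (mu : nat -> S -> S) (f : forall t, S -> U t -> S -> S)
  (t : nat) (xh : S) (u : U t) : set S :=
  [set mu t.+1 (f t xw.1 u xw.2) | xw in
     [set xw : S * S | (X t xw.1 /\ mu t xw.1 = xh) /\ W t xw.2]].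

Definition esup (A : set R) : \bar R := ereal_sup [set (a%:E)%E | a in A].

End Defs.

(* Everything follows from the triangle inequality. Two states with the same
   quantization mu_t are within 2 gamma_t of each other; with the Lipschitz
   continuity of d_t this gives epsilon_t, and with that of f_t plus the
   quantization error gamma_{t+1} of the next state it gives delta_t.
   For the approximate-information-state properties, the values of mu_t form
   the finite codebook Xhat_t, whose distinct points are uniformly apart, so on
   it any bound c + L eta(p1, p2) that vanishes for p1 = p2 is dominated by a
   linear one. Such affine bounds hold for the Hausdorff distance between the
   fibres of m_t |-> mu_t(x_t) (move only the last state of a memory to the
   other codeword), giving L-invertibility, and between the ranges of
   Pi_{t+1} given two codewords, giving lambda_t. *)

From Pilot Require Import Defs.
From HB Require Import structures.
From mathcomp Require Import all_boot all_order all_algebra.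
From mathcomp Require Import boolp classical_sets functions cardinality reals constructive_ereal ereal.
From mathcomp Require Import finmap lra.

Import Order.TTheory GRing.Theory Num.Theory.
Local Open Scope classical_set_scope.
Local Open Scope ring_scope.

Set Implicit Arguments.
Unset Strict Implicit.

Lemma finite_set_bounded (R : realType) (T : Type) (A : set T) (g : T -> T -> R) :
  finite_set A -> exists B : R, forall a b, A a -> A b -> g a b <= B.
Proof.
move=> finA.
have [V eqV] := finite_fsetP.1 (finite_image (fun p => g p.1 p.2) (finite_setX finA finA)).
exists (\big[Num.max/0]_(x <- V) x) => a b Aa Ab.
have Vab : [set` V] (g a b) by rewrite -eqV; exists (a, b).
exact: (le_bigmax_seq 0 (g a b) xpredT id Vab isT).
Qed.

Section Hausdorff.
Variables (R : realType) (Y : Type) (e : Y -> Y -> R).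

Lemma hausdorff_le (A B : set Y) (c : R) :
  (forall a, A a -> exists2 b, B b & e a b <= c) ->
  (forall b, B b -> exists2 a, A a & e a b <= c) ->
  (hausdorff e A B <= c%:E)%E.
Proof.
move=> nearA nearB; rewrite /hausdorff ge_max; apply/andP; split;
  apply: ge_ereal_sup => _ [a Aa <-]; apply: ge_ereal_inf.
- have [b Bb eab] := nearA a Aa; exists (e a b)%:E; first by exists b.
  by rewrite lee_fin.
- have [b Bb eba] := nearB a Aa; exists (e b a)%:E; first by exists b.
  by rewrite lee_fin.
Qed.

Lemma hausdorff_refl_le0 (A : set Y) : (forall y, e y y <= 0) -> (hausdorff e A A <= 0%:E)%E.
Proof. by move=> e_refl; apply: hausdorff_le => a Aa; exists a. Qed.

End Hausdorff.

Lemma abs_sub_esup_le (R : realType) (A : set R) (a c : R) :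
  A a -> (forall b, A b -> b <= a + c) -> (`| a%:E - esup A | <= c%:E)%E.
Proof.
move=> Aa ubA.
have lo : (a%:E <= esup A)%E by apply: ereal_sup_ubound; exists a.
have up : (esup A <= (a + c)%:E)%E.
  by apply: ge_ereal_sup => _ [b Ab <-]; rewrite lee_fin ubA.
move: lo up; case: (esup A) => [r| |] //=; rewrite !lee_fin => lo up.
by rewrite ler_norml; apply/andP; split; lra.
Qed.

Section Metric.
Variables (R : realType) (S : Type) (eta : S -> S -> R).
Hypothesis eta_metric : is_metric eta.

Lemma metric_ge0 x y : 0 <= eta x y.
Proof. by case: eta_metric. Qed.

Lemma metric_xx x : eta x x = 0.
Proof. by case: eta_metric => _ eq0 _ _; apply/eq0. Qed.

Lemma metric_sym x y : eta x y = eta y x.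
Proof. by case: eta_metric. Qed.

Lemma metric_triangle x y z : eta x z <= eta x y + eta y z.
Proof. by case: eta_metric. Qed.

Lemma metric_eq0 x y : eta x y = 0 -> x = y.
Proof. by case: eta_metric => _ eq0 _ _ /eq0. Qed.

Lemma metric_gt0 x y : x <> y -> 0 < eta x y.
Proof. by move=> xy; rewrite lt_neqAle metric_ge0 andbT; apply/eqP => /esym /metric_eq0. Qed.

Lemma finite_separation (A : set S) : finite_set A ->
  exists2 K, 0 <= K & forall a b, A a -> A b -> a <> b -> 1 <= K * eta a b.
Proof.
move=> finA.
have [B invB] := finite_set_bounded
  (fun a b => if pselect (a = b) then 0 else (eta a b)^-1) finA.
exists (Num.max 0 B); first by rewrite le_max lexx.
move=> a b Aa Ab ab; have := invB a b Aa Ab; case: (pselect (a = b)) => [//|_] /= inv_le.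
have eta_gt0 := metric_gt0 ab.
by rewrite -(mulVf (lt0r_neq0 eta_gt0)) ler_pM2r // le_max inv_le orbT.
Qed.

Lemma linear_bound_of_separated (A : set S) (g : S -> S -> \bar R) (K c L : R) :
  0 <= c -> (forall a b, A a -> A b -> a <> b -> 1 <= K * eta a b) ->
  (forall a, A a -> (g a a <= 0%:E)%E) ->
  (forall a b, A a -> A b -> (g a b <= (c + L * eta a b)%:E)%E) ->
  forall a b, A a -> A b -> (g a b <= ((L + c * K) * eta a b)%:E)%E.
Proof.
move=> c_ge0 sep g_diag g_affine a b Aa Ab; have [<-|ab] := pselect (a = b).
  by rewrite metric_xx mulr0 g_diag.
apply: le_trans (g_affine a b Aa Ab) _; rewrite lee_fin mulrDl -mulrA addrC lerD2l.
by rewrite -{1}[c]mulr1 ler_wpM2l // sep.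
Qed.

End Metric.

Definition set_last_state (S : Type) (U : nat -> Type) (t : nat) (m : memory S U t)
    (q : S) : memory S U t :=
  Defs.Mem (fun s : 'I_t.+1 => if s == ord_max then q else mem_x m s) (mem_u m).

Lemma memories_set_last (S : Type) (U : nat -> Type) (X : nat -> set S) (t : nat)
    (m : memory S U t) (q : S) :
  @memories S U X t m -> X t q -> @memories S U X t (set_last_state m q).
Proof. by move=> Mm Xq s /=; case: ifP => [/eqP ->|_]. Qed.

Section Memories.
Variables (R : realType) (S : Type) (U : nat -> Type) (eta : S -> S -> R).
Variable rho : forall s, U s -> U s -> R.
Arguments rho : clear implicits.
Hypothesis eta_metric : is_metric eta.
Hypothesis rho_xx : forall s (u : U s), rho s u u = 0.

Lemma mem_dist_le t (m1 m2 : memory S U t) (c : R) : 0 <= c ->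
  (forall s : 'I_t.+1, eta (mem_x m1 s) (mem_x m2 s) <= c) ->
  (forall s : 'I_t, rho s (mem_u m1 s) (mem_u m2 s) <= c) ->
  mem_dist eta rho m1 m2 <= c.
Proof. by move=> c_ge0 le_x le_u; rewrite /mem_dist ge_max !bigmax_le. Qed.

Lemma mem_dist_refl_le0 t (m : memory S U t) : mem_dist eta rho m m <= 0.
Proof. by apply: mem_dist_le => // s; rewrite ?(metric_xx eta_metric) ?rho_xx. Qed.

Lemma mem_dist_set_last t (m : memory S U t) (q : S) :
  mem_dist eta rho m (set_last_state m q) <= eta (last_state m) q /\
  mem_dist eta rho (set_last_state m q) m <= eta q (last_state m).
Proof.
have eta_ge0 := metric_ge0 eta_metric.
split; (apply: mem_dist_le => //) => s /=; rewrite ?rho_xx //.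
all: by case: ifP => [/eqP ->|_]; rewrite ?(metric_xx eta_metric).
Qed.

End Memories.

Definition quantizer (R : realType) (S : Type) (eta : S -> S -> R)
    (X Xhat : set S) (mu : S -> S) (gamma : R) : Prop :=
  [/\ finite_set Xhat, Xhat `<=` X, 0 <= gamma,
      (forall x, X x -> Xhat (mu x) /\ forall y, Xhat y -> eta x (mu x) <= eta x y) &
      (forall x, X x -> eta x (mu x) <= gamma)].

Section Quantizer.
Variables (R : realType) (S : Type) (eta : S -> S -> R).
Hypothesis eta_metric : is_metric eta.
Variables (X Xhat : set S) (mu : S -> S) (gamma : R).
Hypothesis mu_quantizer : quantizer eta X Xhat mu gamma.

Lemma quantizer_finite : finite_set Xhat.
Proof. by case: mu_quantizer. Qed.

Lemma quantizer_sub : Xhat `<=` X.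
Proof. by case: mu_quantizer. Qed.

Lemma quantizer_ge0 : 0 <= gamma.
Proof. by case: mu_quantizer. Qed.

Lemma quantizer_mem x : X x -> Xhat (mu x).
Proof. by case: mu_quantizer => _ _ _ nearest _ /nearest []. Qed.

Lemma quantizer_err x : X x -> eta x (mu x) <= gamma.
Proof. by case: mu_quantizer => _ _ _ _; apply. Qed.

Lemma quantizer_fixed y : Xhat y -> mu y = y.
Proof.
move=> Xhat_y; case: mu_quantizer => _ _ _ nearest _.
have [_ /(_ y Xhat_y)] := nearest y (quantizer_sub Xhat_y).
rewrite (metric_xx eta_metric) => le0; apply/esym/(metric_eq0 eta_metric)/le_anti.
by rewrite le0 (metric_ge0 eta_metric).
Qed.

Lemma quantizer_dist_le x p : X x -> eta x p <= gamma + eta (mu x) p.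
Proof.
move=> Xx; apply: le_trans (metric_triangle eta_metric x (mu x) p) _.
by rewrite lerD2r quantizer_err.
Qed.

Lemma quantizer_fiber_diam x y : X x -> X y -> mu x = mu y -> eta x y <= 2 * gamma.
Proof.
move=> Xx Xy xy; apply: le_trans (quantizer_dist_le y Xx) _.
by rewrite xy (metric_sym eta_metric) mulr2n mulrDl mul1r lerD2l quantizer_err.
Qed.

End Quantizer.

Section System.
Variables (R : realType) (S : Type) (eta : S -> S -> R) (T : nat).
Variables (X W : nat -> set S) (U : nat -> Type).
Variables (f : forall t, S -> U t -> S -> S) (d : forall t, S -> U t -> R).
Variables (Ld Lf : nat -> R) (Xhat : nat -> set S) (gamma : nat -> R) (mu : nat -> S -> S).
Variable rho : forall s, U s -> U s -> R.
Arguments f : clear implicits.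
Arguments d : clear implicits.
Arguments rho : clear implicits.

Hypothesis eta_metric : is_metric eta.
Hypothesis f_in_X :
  forall t, (t < T)%N -> forall x u w, X t x -> W t w -> X t.+1 (f t x u w).
Hypothesis d_lipschitz : forall t, (t <= T)%N -> 0 <= Ld t /\
  forall u x y, X t x -> X t y -> `|d t x u - d t y u| <= Ld t * eta x y.
Hypothesis f_lipschitz : forall t, (t <= T)%N -> 0 <= Lf t /\
  forall u w x y, X t x -> X t y -> W t w -> eta (f t x u w) (f t y u w) <= Lf t * eta x y.
Hypothesis mu_quantizer :
  forall t, (t <= T)%N -> quantizer eta (X t) (Xhat t) (mu t) (gamma t).
Hypothesis mu_final : mu T.+1 = (fun x => x).
Hypothesis gamma_final : gamma T.+1 = 0.
Hypothesis rho_xx : forall s (u : U s), rho s u u = 0.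

Lemma gamma_next_ge0 t : (t <= T)%N -> 0 <= gamma t.+1.
Proof.
move=> tT; case: (ltnP t T) => [tT'|Tt]; first exact: quantizer_ge0 (mu_quantizer tT').
have tT_eq : t = T by apply/eqP; rewrite eqn_leq tT Tt.
by subst t; rewrite gamma_final.
Qed.

Lemma next_quantization_err t x u w : (t <= T)%N -> X t x -> W t w ->
  eta (f t x u w) (mu t.+1 (f t x u w)) <= gamma t.+1.
Proof.
move=> tT Xx Ww; case: (ltnP t T) => [tT'|Tt].
  exact: quantizer_err (mu_quantizer tT') _ (f_in_X tT' u Xx Ww).
have tT_eq : t = T by apply/eqP; rewrite eqn_leq tT Tt.
by subst t; rewrite mu_final gamma_final (metric_xx eta_metric).
Qed.

Lemma next_quantized_dist t x y u w : (t <= T)%N -> X t x -> X t y -> W t w ->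
  eta (mu t.+1 (f t x u w)) (mu t.+1 (f t y u w)) <= 2 * gamma t.+1 + Lf t * eta x y.
Proof.
move=> tT Xx Xy Ww.
have err_x := next_quantization_err u tT Xx Ww.
have err_y := next_quantization_err u tT Xy Ww.
have f_xy := (f_lipschitz tT).2 u w x y Xx Xy Ww.
set a := f t x u w in err_x f_xy *; set b := f t y u w in err_y f_xy *.
have := metric_triangle eta_metric (mu t.+1 a) a (mu t.+1 b).
have := metric_triangle eta_metric a b (mu t.+1 b).
rewrite (metric_sym eta_metric (mu t.+1 a) a); lra.
Qed.

Definition memory_fiber t (p : S) : set (memory S U t) :=
  @memories S U X t `&` (fun m => mu t (last_state m)) @^-1` [set p].
Arguments memory_fiber : clear implicits.

Lemma memory_fiber_hausdorff t p1 p2 : (t <= T)%N -> Xhat t p1 -> Xhat t p2 ->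
  (hausdorff (mem_dist eta rho (t:=t)) (memory_fiber t p1) (memory_fiber t p2)
   <= (gamma t + eta p1 p2)%:E)%E.
Proof.
move=> tT Xhat_p1 Xhat_p2; have Q := mu_quantizer tT.
have fiber_set_last m p :
    @memories S U X t m -> Xhat t p -> memory_fiber t p (set_last_state m p).
  move=> Mm Xhat_p; split; first exact: memories_set_last (quantizer_sub Q Xhat_p).
  by rewrite /= eqxx (quantizer_fixed eta_metric Q).
apply: hausdorff_le => m [Mm /= mp].
- exists (set_last_state m p2); first exact: fiber_set_last.
  apply: le_trans (mem_dist_set_last eta_metric rho_xx m p2).1 _.
  by rewrite -mp (quantizer_dist_le eta_metric Q p2 (Mm ord_max)).
- exists (set_last_state m p1); first exact: fiber_set_last.
  apply: le_trans (mem_dist_set_last eta_metric rho_xx m p1).2 _.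
  by rewrite !(metric_sym eta_metric p1) -mp (quantizer_dist_le eta_metric Q p1 (Mm ord_max)).
Qed.

Lemma aistate_L_invertible t : (t <= T)%N ->
  exists L, L_invertible (mem_dist eta rho (t:=t)) eta (@memories S U X t)
                         (fun m => mu t (last_state m)) L.
Proof.
move=> tT; have Q := mu_quantizer tT.
have [K K_ge0 sep] := finite_separation eta_metric (quantizer_finite Q).
have fibers_lip : forall p1 p2, Xhat t p1 -> Xhat t p2 ->
    (hausdorff (mem_dist eta rho (t:=t)) (memory_fiber t p1) (memory_fiber t p2)
     <= ((1 + gamma t * K) * eta p1 p2)%:E)%E.
  apply: (linear_bound_of_separated eta_metric (quantizer_ge0 Q) sep).
  - by move=> p _; apply: hausdorff_refl_le0 => m; apply: mem_dist_refl_le0.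
  - by move=> q1 q2 Xhat_q1 Xhat_q2; rewrite mul1r memory_fiber_hausdorff.
exists (1 + gamma t * K); split; first by rewrite addr_ge0 // mulr_ge0 ?(quantizer_ge0 Q).
move=> _ _ [m1 Mm1 <-] [m2 Mm2 <-].
exact: fibers_lip (quantizer_mem Q (Mm1 ord_max)) (quantizer_mem Q (Mm2 ord_max)).
Qed.

Lemma rangePi_hat_hausdorff t (u : U t) p1 p2 : (t <= T)%N -> Xhat t p1 -> Xhat t p2 ->
  (hausdorff eta (rangePi_hat X W mu f p1 u) (rangePi_hat X W mu f p2 u)
   <= (2 * gamma t.+1 + Lf t * gamma t + Lf t * eta p1 p2)%:E)%E.
Proof.
move=> tT Xhat_p1 Xhat_p2; have Q := mu_quantizer tT; have Lf_ge0 := (f_lipschitz tT).1.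
have X_p1 := quantizer_sub Q Xhat_p1; have X_p2 := quantizer_sub Q Xhat_p2.
rewrite -addrA -mulrDr.
apply: hausdorff_le => _ [[x w] /= [[Xx xp] Ww] <-].
- exists (mu t.+1 (f t p2 u w)).
    by exists (p2, w) => //; rewrite /= (quantizer_fixed eta_metric Q).
  apply: le_trans (next_quantized_dist u tT Xx X_p2 Ww) _.
  by rewrite lerD2l ler_wpM2l // -xp (quantizer_dist_le eta_metric Q).
- exists (mu t.+1 (f t p1 u w)).
    by exists (p1, w) => //; rewrite /= (quantizer_fixed eta_metric Q).
  apply: le_trans (next_quantized_dist u tT X_p1 Xx Ww) _.
  rewrite lerD2l ler_wpM2l // !(metric_sym eta_metric p1) -xp.
  exact: (quantizer_dist_le eta_metric Q p1 Xx).
Qed.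

Lemma rangePi_hat_lipschitz t : exists lambda : R, (t <= T)%N ->
  0 <= lambda /\
  forall (u : U t) p1 p2, Xhat t p1 -> Xhat t p2 ->
    (hausdorff eta (rangePi_hat X W mu f p1 u) (rangePi_hat X W mu f p2 u)
     <= (lambda * eta p1 p2)%:E)%E.
Proof.
have [tT|_] := boolP (t <= T)%N; last by exists 0.
have Q := mu_quantizer tT; have Lf_ge0 := (f_lipschitz tT).1.
have c_ge0 : 0 <= 2 * gamma t.+1 + Lf t * gamma t.
  by rewrite addr_ge0 ?mulr_ge0 ?gamma_next_ge0 ?(quantizer_ge0 Q).
have [K K_ge0 sep] := finite_separation eta_metric (quantizer_finite Q).
exists (Lf t + (2 * gamma t.+1 + Lf t * gamma t) * K) => _.
split; first by rewrite addr_ge0 // mulr_ge0.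
move=> u; apply: (linear_bound_of_separated eta_metric c_ge0 sep).
- by move=> p _; apply: hausdorff_refl_le0 => y; rewrite (metric_xx eta_metric).
- by move=> p1 p2; apply: rangePi_hat_hausdorff.
Qed.

Lemma aistate_lambda : exists lambda : nat -> R, forall t, (t <= T)%N ->
  0 <= lambda t /\
  forall (u : U t) p1 p2, Xhat t p1 -> Xhat t p2 ->
    (hausdorff eta (rangePi_hat X W mu f p1 u) (rangePi_hat X W mu f p2 u)
     <= (lambda t * eta p1 p2)%:E)%E.
Proof. by have /choice [lambda lambdaP] := rangePi_hat_lipschitz; exists lambda. Qed.

Lemma cost_sup_error t (m : memory S U t) (u : U t) :
  (t <= T)%N -> @memories S U X t m ->
  (`| esup (rangeC_mem d m u) - esup (rangeC_hat X mu d (mu t (last_state m)) u) |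
   <= (2 * Ld t * gamma t)%:E)%E.
Proof.
move=> tT Mm; have Q := mu_quantizer tT; have [Ld_ge0 d_lip] := d_lipschitz tT.
have Xx : X t (last_state m) := Mm ord_max.
rewrite /rangeC_mem /esup image_set1 ereal_sup1.
apply: abs_sub_esup_le; first by exists (last_state m).
move=> _ [y [Xy yx] <-].
have d_yx : d t y u - d t (last_state m) u <= Ld t * eta y (last_state m).
  exact: le_trans (ler_norm _) (d_lip u y _ Xy Xx).
have := ler_wpM2l Ld_ge0 (quantizer_fiber_diam eta_metric Q Xy Xx yx).
rewrite mulrCA mulrA; lra.
Qed.

Lemma next_state_hausdorff_error t (m : memory S U t) (u : U t) :
  (t <= T)%N -> @memories S U X t m ->
  (hausdorff eta (rangePi_mem W mu f m u)
                 (rangePi_hat X W mu f (mu t (last_state m)) u)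
   <= (2 * gamma t.+1 + 2 * Lf t * gamma t)%:E)%E.
Proof.
move=> tT Mm; have Q := mu_quantizer tT; have Lf_ge0 := (f_lipschitz tT).1.
have Xx : X t (last_state m) := Mm ord_max.
apply: hausdorff_le.
- move=> _ [w Ww <-]; exists (mu t.+1 (f t (last_state m) u w)).
    by exists (last_state m, w).
  by rewrite (metric_xx eta_metric) addr_ge0 ?mulr_ge0 ?gamma_next_ge0 ?(quantizer_ge0 Q).
- move=> _ [[y w] /= [[Xy yx] Ww] <-].
  exists (mu t.+1 (f t (last_state m) u w)); first by exists w.
  apply: le_trans (next_quantized_dist u tT Xx Xy Ww) _.
  by rewrite lerD2l -mulrA mulrCA ler_wpM2l // (quantizer_fiber_diam eta_metric Q).
Qed.

End System.

Unset Implicit Arguments.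
Set Strict Implicit.

Theorem theorem5 (R : realType) (S : Type) (eta : S -> S -> R) (T : nat)
  (X W : nat -> set S) (U : nat -> Type)
  (f : forall t, S -> U t -> S -> S) (d : forall t, S -> U t -> R)
  (Ld Lf : nat -> R)
  (Xhat : nat -> set S) (gamma : nat -> R) (mu : nat -> S -> S)
  (rho : forall s, U s -> U s -> R) :
  (* metric space and compact state / noise sets *)
  is_metric eta ->
  (forall t, (t <= T)%N -> eta_compact eta (X t) /\ X t !=set0) ->
  (forall t, (t <= T)%N -> eta_compact eta (W t) /\ W t !=set0) ->
  (* dynamics keep the state in the state sets *)
  (forall t, (t < T)%N -> forall x u w, X t x -> W t w -> X t.+1 (f t x u w)) ->
  (* Lipschitz constants *)
  (forall t, (t <= T)%N -> 0 <= Ld t /\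
     forall u x y, X t x -> X t y -> `|d t x u - d t y u| <= Ld t * eta x y) ->
  (forall t, (t <= T)%N -> 0 <= Lf t /\
     forall u w x y, X t x -> X t y -> W t w ->
       eta (f t x u w) (f t y u w) <= Lf t * eta x y) ->
  (* quantization *)
  (forall t, (t <= T)%N ->
     [/\ finite_set (Xhat t), Xhat t `<=` X t, 0 <= gamma t,
         (forall x, X t x -> Xhat t (mu t x) /\
                             forall y, Xhat t y -> eta x (mu t x) <= eta x y) &
         (forall x, X t x -> eta x (mu t x) <= gamma t)]) ->
  mu T.+1 = (fun x => x) -> gamma T.+1 = 0 ->
  (* metric on actions (used for the metric on memories) *)
  (forall s (u1 u2 : U s), 0 <= rho s u1 u2) -> (forall s (u : U s), rho s u u = 0) ->
  (* Pi_hat_t = mu_t(X_t) is an approximate information state ... *)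
  ((forall t, (t <= T)%N ->
      (exists L : R, L_invertible (mem_dist eta rho (t:=t)) eta
                       (@memories S U X t) (fun m => mu t (last_state m)) L) /\
      (exists B : R, forall a b, Xhat t a -> Xhat t b -> eta a b <= B)) /\
   (exists lambda : nat -> R, forall t, (t <= T)%N -> 0 <= lambda t /\
      forall (u : U t) p1 p2, Xhat t p1 -> Xhat t p2 ->
        (hausdorff eta (rangePi_hat X W mu f p1 u) (rangePi_hat X W mu f p2 u)
           <= (lambda t * eta p1 p2)%:E)%E)) /\
  (* ... with the explicit constants epsilon_t and delta_t *)
  (forall t, (t <= T)%N -> forall m : memory S U t, @memories S U X t m -> forall u : U t,
     (`| esup (rangeC_mem d m u) - esup (rangeC_hat X mu d (mu t (last_state m)) u) |
        <= (2 * Ld t * gamma t)%:E)%E /\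
     (hausdorff eta (rangePi_mem W mu f m u)
                    (rangePi_hat X W mu f (mu t (last_state m)) u)
        <= (2 * gamma t.+1 + 2 * Lf t * gamma t)%:E)%E).
Proof.
move=> eta_metric _ _ f_in_X d_lip f_lip mu_quant mu_final gamma_final _ rho_xx.
split; first split.
- move=> t tT; split; first exact: aistate_L_invertible eta_metric mu_quant rho_xx t tT.
  exact: finite_set_bounded (quantizer_finite (mu_quant t tT)).
- exact: aistate_lambda eta_metric f_in_X f_lip mu_quant mu_final gamma_final.
- move=> t tT m Mm u; split.
  + exact: cost_sup_error eta_metric d_lip mu_quant t m u tT Mm.
  + exact: next_state_hausdorff_error eta_metric f_in_X f_lip mu_quant mu_final gamma_final
      t m u tT Mm.
Qed.
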